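(* Suppose $H$ is an $\alpha$-Erdős–Simonovits good graph for some $0\leq \alpha<1$, and let $H^*$ be formed by taking $s$ copies of $H$ and gluing them along an edge $f$ of $H$. Then there is a constant $C$ such that for all $n$, $$\mathrm{ex}(n, H) \leq \mathrm{ex}(n, H^* ) \leq C n^{1 + \alpha}.$$
   Context: A graph $H$ is $(\alpha, C, \beta)$-Erdős–Simonovits good if every $n$-vertex graph $G$ with $pn^2\geq Cn^{1 + \alpha}$ edges contains at least $\beta p^{\mathrm{e}(H)}n^{v(H)}$ copies of $H$; it is $\alpha$-Erdős–Simonovits good if this holds for some positive constants $C,\beta$. Gluing $s$ copies of $H$ along the edge $f$ means taking $s$ copies of $H$ that are pairwise vertex-disjoint except that the copies of the (labeled) edge $f$ are identified into a single edge, endpoint to corresponding endpoint. $\mathrm{ex}(n,H)$ is the Turán number. *)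

From HB Require Import structures.
From mathcomp Require Import all_boot all_order all_algebra.
From mathcomp Require Import reals exp.
Set Implicit Arguments. Unset Strict Implicit. Unset Printing Implicit Defensive.
Import Order.TTheory GRing.Theory Num.Theory.
Local Open Scope ring_scope.

Definition simple_graph (T : finType) (E : {set T * T}) : bool :=
  [forall x, (x, x) \notin E] &&
  [forall x, forall y, ((x, y) \in E) ==> ((y, x) \in E)].

Definition nedges (T : finType) (E : {set T * T}) : nat := (#|E| %/ 2)%N.

Definition is_emb (V W : finType) (EH : {set V * V}) (EG : {set W * W})
    (f : {ffun V -> W}) : bool :=
  injectiveb f && [forall x, forall y, ((x, y) \in EH) ==> ((f x, f y) \in EG)].

Definition ncopies (V W : finType) (EH : {set V * V}) (EG : {set W * W}) : nat :=
  #|[set f : {ffun V -> W} | is_emb EH EG f]|.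

Definition contains (V W : finType) (EG : {set W * W}) (EH : {set V * V}) : bool :=
  (0 < ncopies EH EG)%N.

Definition turan (V : finType) (EH : {set V * V}) (n : nat) : nat :=
  \max_(E : {set 'I_n * 'I_n} | simple_graph E && ~~ contains E EH) nedges E.

Definition ES_good_with (R : realType) (V : finType) (EH : {set V * V})
    (alpha C beta : R) : Prop :=
  forall (n : nat) (EG : {set 'I_n * 'I_n}), (0 < n)%N -> simple_graph EG ->
    C * powR (n%:R) (1 + alpha) <= (nedges EG)%:R ->
    beta * ((nedges EG)%:R / (n%:R ^+ 2)) ^+ nedges EH * n%:R ^+ #|V|
      <= (ncopies EH EG)%:R.

Definition ES_good (R : realType) (V : finType) (EH : {set V * V}) (alpha : R) : Prop :=
  exists C beta : R, 0 < C /\ 0 < beta /\ ES_good_with EH alpha C beta.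

(* Gluing s copies of H along the labelled edge f = (a, b).
   Vertices: pairs (i, x) (copy i, vertex x of H); the endpoints a, b are
   shared, represented canonically by copy 0. *)
Definition glue_canon (V : finType) (s : nat) (a b : V) (v : 'I_s * V) : bool :=
  ((v.2 != a) && (v.2 != b)) || (val v.1 == 0%N).

Definition glueV (V : finType) (s : nat) (a b : V) : finType :=
  {v : 'I_s * V | glue_canon a b v}.

Definition glueE (V : finType) (s : nat) (a b : V) (EH : {set V * V})
  : {set glueV s a b * glueV s a b} :=
  [set uv : glueV s a b * glueV s a b |
     let u := val uv.1 in let v := val uv.2 in
     ((u.2, v.2) \in EH) &&
     [|| u.1 == v.1, u.2 == a, u.2 == b, v.2 == a | v.2 == b]].

From HB Require Import structures.
From mathcomp Require Import all_boot all_order all_algebra.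
From mathcomp Require Import reals exp.
From mathcomp Require Import zify lra.
Import Order.TTheory GRing.Theory Num.Theory.
Set Implicit Arguments. Unset Strict Implicit. Unset Printing Implicit Defensive.

(* Let G be an n-vertex graph with no copy of H*. For each edge uw of G, a greedy
   search either finds s copies of H sending the glued edge f = ab to uw that are
   disjoint away from u and w, which glue to a copy of H*, or a set Y(u,w) of at
   most s|V(H)| vertices, avoiding u and w, that meets the non-isolated part of
   every such copy. Pick a vertex set S at random and keep the edges uw with
   u, w in S and S disjoint from Y(u,w) and Y(w,u). The kept graph is H-free: a copy
   of H in it sends f to a kept edge uw and has a non-isolated vertex mapped into
   Y(u,w), yet that vertex lies on a kept edge, so its image is in S. An edge is
   kept with probability at least 2^-(2s|V(H)|+2), so some H-free subgraph keeps
   that fraction of the edges of G, and the Erdos-Simonovits property bounds it by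
   C n^(1+alpha). The lower bound on ex(n, H* ) holds because H is a subgraph of H*. *)

Lemma simple_graphP (T : finType) (E : {set T * T}) :
  reflect ((forall x, (x, x) \notin E) /\ (forall x y, (x, y) \in E -> (y, x) \in E))
          (simple_graph E).
Proof.
apply: (iffP andP) => [[/forallP irr /forallP sym]|[irr sym]].
  by split=> // x y; move: (sym x) => /forallP/(_ y)/implyP.
split; first exact/forallP.
by apply/forallP=> x; apply/forallP=> y; apply/implyP/sym.
Qed.

Section Embeddings.
Variables (V W : finType) (EH : {set V * V}) (EG : {set W * W}).

Lemma is_embP (f : {ffun V -> W}) :
  reflect (injective f /\ forall x y, (x, y) \in EH -> (f x, f y) \in EG)
          (is_emb EH EG f).
Proof.
apply: (iffP andP) => [[/injectiveP f_inj /forallP f_hom]|[f_inj f_hom]].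
  by split=> // x y; move: (f_hom x) => /forallP/(_ y)/implyP.
split; first exact/injectiveP.
by apply/forallP=> x; apply/forallP=> y; apply/implyP/f_hom.
Qed.

Lemma containsP : reflect (exists f, is_emb EH EG f) (contains EG EH).
Proof.
rewrite /contains /ncopies card_gt0.
by apply: (iffP (set0Pn _)) => -[f f_emb]; exists f; rewrite inE in f_emb *.
Qed.

End Embeddings.

Lemma contains_trans (U V W : finType) (EU : {set U * U}) (EV : {set V * V})
    (EW : {set W * W}) :
  contains EV EU -> contains EW EV -> contains EW EU.
Proof.
move=> /containsP[f /is_embP[f_inj f_hom]] /containsP[g /is_embP[g_inj g_hom]].
apply/containsP; exists [ffun x => g (f x)]; apply/is_embP; split.
  by move=> x y; rewrite !ffunE => /g_inj/f_inj.
by move=> x y xy; rewrite !ffunE; apply/g_hom/f_hom.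
Qed.

Lemma turan_mono (V V' : finType) (EH : {set V * V}) (EH' : {set V' * V'}) (n : nat) :
  contains EH' EH -> turan EH n <= turan EH' n.
Proof.
move=> HH'; apply/bigmax_leqP => E /andP[E_simple E_free].
apply: leq_bigmax_cond; rewrite E_simple /=.
by apply: contra E_free => /(contains_trans HH').
Qed.

Lemma contains_glue (V : finType) (EH : {set V * V}) (s : nat) (a b : V) :
  0 < s -> contains (glueE s a b EH) EH.
Proof.
move=> s_gt0.
have canon x : glue_canon a b (Ordinal s_gt0, x) by rewrite /glue_canon eqxx orbT.
apply/containsP; exists [ffun x => Sub (Ordinal s_gt0, x) (canon x)]; apply/is_embP; split.
  by move=> x y; rewrite !ffunE => /(congr1 val) [].
by move=> x y xy; rewrite !ffunE inE /= xy.
Qed.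

Lemma card_le_exists_inj_in (T U : finType) (u0 : U) (A : {pred T}) (B : {pred U}) :
  #|A| <= #|B| -> exists2 f : T -> U, {in A &, injective f} & {in A, forall x, f x \in B}.
Proof.
move=> leAB; pose f x := nth u0 (enum B) (index x (enum A)).
have f_in x : x \in A -> index x (enum A) < size (enum B).
  by move=> xA; rewrite -cardE (leq_trans _ leAB) // cardE index_mem mem_enum.
exists f => [x y xA yA /eqP|x xA]; last by rewrite -mem_enum mem_nth ?f_in.
by rewrite nth_uniq ?enum_uniq ?f_in // => /eqP/(index_inj x); apply; rewrite mem_enum.
Qed.

Lemma extend_injective (V W : finType) (w0 : W) (N : {set V}) (X : {set W}) (phi : V -> W) :
  #|X| + #|V| <= #|W| -> {in N &, injective phi} ->
  exists psi : {ffun V -> W},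
    [/\ injective psi, {in N, psi =1 phi} & forall x, x \notin N -> psi x \notin X].
Proof.
move=> room phi_inj; set X' := X :|: phi @: N.
have [f f_inj f_out] : exists2 f : V -> W,
    {in ~: N &, injective f} & {in ~: N, forall x, f x \in ~: X'}.
  apply: (card_le_exists_inj_in w0).
  have X'_le : #|X'| <= #|X| + #|phi @: N| := leq_card_setU _ _.
  have := cardsC N; have := cardsC X'; have := leq_imset_card phi N; lia.
pose psi := [ffun x => if x \in N then phi x else f x].
have psi_out x : x \notin N -> psi x \notin X'.
  by move=> xN; rewrite ffunE (negbTE xN) -in_setC f_out // inE.
have phiN x : x \in N -> phi x \in X' by move=> xN; rewrite inE imset_f ?orbT.
exists psi; split=> [x y|x xN|x /psi_out]; last 2 first.
- by rewrite ffunE xN.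
- by apply: contra; rewrite inE => ->.
case xN: (x \in N); case yN: (y \in N); rewrite !ffunE xN yN => e.
- exact: phi_inj.
- by have := psi_out y (negbT yN); rewrite ffunE yN -e phiN.
- by have := psi_out x (negbT xN); rewrite ffunE xN e phiN.
- by apply: f_inj; rewrite ?inE ?xN ?yN.
Qed.

Section RootedCopies.
Variables (V W : finType) (EH : {set V * V}) (EG : {set W * W}) (a b : V).

Definition nonisolated : {set V} :=
  [set x | [exists y, ((x, y) \in EH) || ((y, x) \in EH)]].

Definition rooted_emb (u w : W) (phi : {ffun V -> W}) : bool :=
  [&& is_emb EH EG phi, phi a == u & phi b == w].

Definition meets (Y : {set W}) (phi : {ffun V -> W}) : bool :=
  [exists x in nonisolated, phi x \in Y].

Definition hitting_set (u w : W) (Y : {set W}) : bool :=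
  [&& u \notin Y, w \notin Y & [forall phi, rooted_emb u w phi ==> meets Y phi]].

Definition internally_disjoint (j : nat) (phis : nat -> {ffun V -> W}) : Prop :=
  forall i i' x y, i < j -> i' < j -> i != i' -> x != a -> x != b -> phis i x != phis i' y.

Lemma nonisolatedl x y : (x, y) \in EH -> x \in nonisolated.
Proof. by move=> xy; rewrite inE; apply/existsP; exists y; rewrite xy. Qed.

Lemma nonisolatedr x y : (x, y) \in EH -> y \in nonisolated.
Proof. by move=> xy; rewrite inE; apply/existsP; exists x; rewrite xy orbT. Qed.

Lemma rooted_emb_inner u w phi x :
  rooted_emb u w phi -> x != a -> x != b -> (phi x != u) && (phi x != w).
Proof.
case/and3P=> /is_embP[phi_inj _] /eqP <- /eqP <- xa xb.
by rewrite !(inj_eq phi_inj) xa xb.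
Qed.

Lemma rooted_emb_avoiding u w (Y : {set W}) phi :
  (a, b) \in EH -> #|Y| + #|V| <= #|W| -> rooted_emb u w phi -> ~~ meets Y phi ->
  exists2 psi, rooted_emb u w psi & forall x, psi x \notin Y.
Proof.
move=> ab room /and3P[/is_embP[phi_inj phi_hom] phi_a phi_b] phi_avoids.
have [psi [psi_inj psi_phi psi_out]] :=
  extend_injective u (N := nonisolated) room (in2W phi_inj).
exists psi => [|x].
  apply/and3P; split.
  - apply/is_embP; split=> // x y xy.
    by rewrite !psi_phi ?phi_hom ?(nonisolatedl xy) ?(nonisolatedr xy).
  - by rewrite psi_phi ?(nonisolatedl ab).
  - by rewrite psi_phi ?(nonisolatedr ab).
have [xN|/psi_out //] := boolP (x \in nonisolated).
by rewrite psi_phi //; apply: contra phi_avoids => phi_x; apply/existsP; exists x; rewrite xN.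
Qed.

Lemma hitting_set_or_disjoint_copies u w s :
  (a, b) \in EH -> s * #|V| <= #|W| -> forall j, j <= s ->
  (exists2 Y : {set W}, #|Y| <= j * #|V| & hitting_set u w Y) \/
  (exists2 phis : nat -> {ffun V -> W},
     forall i, i < j -> rooted_emb u w (phis i) & internally_disjoint j phis).
Proof.
move=> ab room; elim=> [_|j IH lt_js]; first by right; exists (fun=> [ffun=> u]).
have le_jSj : j * #|V| <= j.+1 * #|V| by rewrite leq_mul2r leqnSn orbT.
have [[Y Y_le Y_hit]|[phis copies disj]] := IH (ltnW lt_js).
  by left; exists Y => //; apply: leq_trans le_jSj.
pose Y := [set phis p.1 p.2 | p : 'I_j * V] :\: [set u; w].
have Y_le : #|Y| <= j * #|V|.
  apply: leq_trans (subset_leq_card (subsetDl _ _)) _.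
  by apply: leq_trans (leq_imset_card _ _) _; rewrite card_prod card_ord.
have inner_in_Y i x : i < j -> x != a -> x != b -> phis i x \in Y.
  move=> lt_ij xa xb; rewrite in_setD !inE negb_or rooted_emb_inner ?copies //=.
  by apply/imsetP; exists (Ordinal lt_ij, x).
have [Y_hit|] := boolP (hitting_set u w Y).
  by left; exists Y => //; apply: leq_trans le_jSj.
rewrite {1}/hitting_set !in_setD !in_set2 !eqxx ?orbT /= negb_forall => /existsP[phi].
rewrite negb_imply => /andP[phi_rooted phi_misses].
have [|psi psi_rooted psi_out] := rooted_emb_avoiding ab _ phi_rooted phi_misses.
  apply: leq_trans (leq_add Y_le (leqnn _)) _; apply: leq_trans room.
  by rewrite addnC -mulSn leq_mul2r lt_js orbT.
have psi_new i x y : i < j -> x != a -> x != b -> psi x != phis i y.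
  move=> lt_ij xa xb; have /andP[xu xw] := rooted_emb_inner psi_rooted xa xb.
  case/and3P: (copies i lt_ij) => _ /eqP phi_a /eqP phi_b.
  have [->|ya] := eqVneq y a; first by rewrite phi_a.
  have [->|yb] := eqVneq y b; first by rewrite phi_b.
  by apply: contraNneq (psi_out x) => ->; apply: inner_in_Y.
right; exists (fun i => if i == j then psi else phis i).
  by move=> i; rewrite ltnS (leq_eqVlt i); case: eqP => [_ _|_ /copies].
move=> i i' x y; rewrite !ltnS (leq_eqVlt i) (leq_eqVlt i').
case: (eqVneq i j) => [->|ne_ij]; case: (eqVneq i' j) => [->|ne_i'j] //=.
- by move=> _ lt_i'j _; apply: psi_new.
- move=> lt_ij _ _ xa xb; apply: contraTneq (inner_in_Y i x lt_ij xa xb) => ->.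
  exact: psi_out.
- exact: disj.
Qed.

Lemma contains_glue_of_disjoint s u w phis :
  (forall i, i < s -> rooted_emb u w (phis i)) -> internally_disjoint s phis ->
  contains EG (glueE s a b EH).
Proof.
move=> copies disj.
have copy_emb i : i < s ->
    injective (phis i) /\ forall x y, (x, y) \in EH -> (phis i x, phis i y) \in EG.
  by move=> lt_is; case/and3P: (copies i lt_is) => /is_embP.
have root_eq i i' x : i < s -> i' < s -> (x == a) || (x == b) -> phis i x = phis i' x.
  move=> lt_is lt_i's; case/and3P: (copies i lt_is) => _ /eqP ai /eqP bi.
  case/and3P: (copies i' lt_i's) => _ /eqP ai' /eqP bi'.
  by case/orP=> /eqP ->; rewrite ?ai ?ai' ?bi ?bi'.
apply/containsP; exists [ffun v : glueV s a b => phis (val v).1 (val v).2].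
apply/is_embP; split.
  move=> [[i x] canon_x] [[i' y] canon_y]; rewrite !ffunE /= => e; apply: val_inj => /=.
  have [eq_ii'|ne_ii'] := eqVneq i i'.
    by rewrite -eq_ii' in e *; rewrite ((copy_emb i (ltn_ord i)).1 _ _ e).
  exfalso; have [/andP[xa xb]|x_root] := boolP ((x != a) && (x != b)).
    by have := disj i i' x y (ltn_ord i) (ltn_ord i') ne_ii' xa xb; rewrite e eqxx.
  have [/andP[ya yb]|y_root] := boolP ((y != a) && (y != b)).
    have := disj i' i y x (ltn_ord i') (ltn_ord i); rewrite eq_sym ne_ii' -e eqxx.
    by move/(_ isT ya yb).
  move: canon_x canon_y ne_ii'; rewrite /glue_canon /= (negbTE x_root) (negbTE y_root) /=.
  by move=> /eqP i0 /eqP i'0; rewrite -val_eqE /= i0 i'0.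
move=> [[i x] canon_x] [[i' y] canon_y]; rewrite inE !ffunE /= => /andP[xy].
have [<- _|_] := eqVneq i i'; first exact: (copy_emb i (ltn_ord i)).2.
rewrite /= orbA => /orP[x_root|y_root].
  by rewrite (root_eq i i' x) ?ltn_ord //; apply: (copy_emb i' (ltn_ord i')).2.
by rewrite (root_eq i' i y) ?ltn_ord //; apply: (copy_emb i (ltn_ord i)).2.
Qed.

Definition hitting_choice (s : nat) (u w : W) : {set W} :=
  odflt set0 [pick Y : {set W} | (#|Y| <= s * #|V|) && hitting_set u w Y].

Lemma hitting_choiceP s u w :
  (a, b) \in EH -> s * #|V| <= #|W| -> ~~ contains EG (glueE s a b EH) ->
  #|hitting_choice s u w| <= s * #|V| /\ hitting_set u w (hitting_choice s u w).
Proof.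
move=> ab room G_free; rewrite /hitting_choice; case: pickP => [Y /andP[]//|none].
have [[Y Y_le Y_hit]|[phis copies disj]] :=
  hitting_set_or_disjoint_copies u w ab room (leqnn s).
  by have := none Y; rewrite Y_le Y_hit.
by rewrite (contains_glue_of_disjoint copies disj) in G_free.
Qed.

End RootedCopies.

Lemma card_supsets_avoiding (T : finType) (U Z : {set T}) : [disjoint U & Z] ->
  2 ^ #|T| <= #|[set S : {set T} | (U \subset S) && [disjoint Z & S]]| * 2 ^ #|U :|: Z|.
Proof.
move=> UZ; set B := ~: (U :|: Z).
have B_sub (S : {set T}) : S \in powerset B -> S \subset ~: U /\ S \subset ~: Z.
  by rewrite inE => SB; split; apply: subset_trans SB _; rewrite setCS (subsetUl, subsetUr).
have addU_inj : {in powerset B &, injective (fun S => S :|: U)}.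
  have addUK S : S \in powerset B -> (S :|: U) :\: U = S.
    move/B_sub=> [SU _]; rewrite setDUl setDv setU0.
    by apply/setDidPl; rewrite disjoints_subset.
  by move=> S1 S2 /addUK {2}<- /addUK {2}<- ->.
have addU_sub : (fun S => S :|: U) @: powerset B \subset
    [set S : {set T} | (U \subset S) && [disjoint Z & S]].
  apply/subsetP=> _ /imsetP[S /B_sub[_ SZ] ->].
  by rewrite inE subsetUr disjoint_sym disjoints_subset subUset SZ -disjoints_subset.
rewrite -(cardsC (U :|: Z)) expnD mulnC leq_pmul2r ?expn_gt0 //.
apply: leq_trans (subset_leq_card addU_sub).
by rewrite (card_in_imset addU_inj) card_powerset.
Qed.

Lemma exists_dense_member (I T : finType) (i0 : I) (F : I -> {set T}) (A : {set T}) (D : nat) :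
  (forall e, e \in A -> #|I| <= #|[set i | e \in F i]| * D) ->
  exists i, #|A| <= #|F i| * D.
Proof.
move=> often; have [i _ i_max] := @arg_maxnP I i0 predT (fun i => #|F i|) isT.
exists i; rewrite -(@leq_pmul2l #|I|); last by apply/card_gt0P; exists i0.
have double_count : \sum_(e in A) #|[set i | e \in F i]| <= \sum_i #|F i|.
  rewrite (eq_bigr _ (fun e _ => esym (sum1dep_card _))) /=.
  rewrite (exchange_big_dep predT) //=; apply: leq_sum => j _.
  by rewrite sum1dep_card subset_leq_card //; apply/subsetP=> e; rewrite inE => /andP[].
apply: leq_trans (_ : \sum_(e in A) #|[set i | e \in F i]| * D <= _).
  by rewrite mulnC -sum_nat_const leq_sum.
rewrite -big_distrl /= mulnA leq_mul2r (leq_trans double_count) ?orbT //.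
by rewrite -sum_nat_const leq_sum.
Qed.

Section Sparsify.
Variables (W : finType) (EG : {set W * W}) (Z : W * W -> {set W}).

Definition sparsify (S : {set W}) : {set W * W} :=
  [set e in EG | [&& e.1 \in S, e.2 \in S & [disjoint Z e & S]]].

Lemma simple_sparsify S :
  simple_graph EG -> (forall x y, Z (x, y) = Z (y, x)) -> simple_graph (sparsify S).
Proof.
move=> /simple_graphP[irr sym] Z_sym; apply/simple_graphP; split=> [x|x y].
  by rewrite inE (negbTE (irr x)).
by rewrite !inE /= Z_sym => /andP[/sym -> /and3P[-> -> ->]].
Qed.

Lemma card_sparsify_keeps e : e \in EG -> e.1 \notin Z e -> e.2 \notin Z e ->
  2 ^ #|W| <= #|[set S | e \in sparsify S]| * 2 ^ (#|Z e| + 2).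
Proof.
move=> eG e1Z e2Z.
have ends_Z : [disjoint [set e.1; e.2] & Z e].
  by rewrite disjoints_subset subUset !sub1set !inE e1Z e2Z.
apply: leq_trans (card_supsets_avoiding ends_Z) _; apply: leq_mul.
  apply/subset_leq_card/subsetP=> S; rewrite !inE eG subUset !sub1set.
  by case/andP=> /andP[-> ->] ->.
rewrite leq_exp2l // (leq_trans (leq_card_setU _ _)) // addnC leq_add2l cards2.
by case: (_ != _).
Qed.

End Sparsify.

Lemma sparsify_free (V W : finType) (EH : {set V * V}) (EG : {set W * W}) (a b : V)
    (Z : W * W -> {set W}) (S : {set W}) :
  (a, b) \in EH ->
  (forall u w phi, rooted_emb EH EG a b u w phi -> meets EH (Z (u, w)) phi) ->
  ~~ contains (sparsify EG Z S) EH.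
Proof.
move=> ab Z_hits; apply/containsP => -[phi /is_embP[phi_inj phi_hom]].
have kept x y : (x, y) \in EH -> [&& (phi x, phi y) \in EG, phi x \in S,
    phi y \in S & [disjoint Z (phi x, phi y) & S]].
  by move/phi_hom; rewrite inE.
have /existsP[x /andP[x_nonisol x_Z]] : meets EH (Z (phi a, phi b)) phi.
  apply: Z_hits; rewrite /rooted_emb !eqxx !andbT; apply/is_embP; split=> // x y.
  by case/kept/andP.
have /and4P[_ _ _ /disjointFr/(_ x_Z) x_notin_S] := kept a b ab.
move: x_nonisol; rewrite inE => /existsP[y /orP[/kept/and4P[_ Sx _ _]|/kept/and4P[_ _ Sx _]]];
  by rewrite x_notin_S in Sx.
Qed.

Lemma glue_free_dense_subgraph (V W : finType) (EH : {set V * V}) (EG : {set W * W})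
    (s : nat) (a b : V) :
  (a, b) \in EH -> simple_graph EG -> s * #|V| <= #|W| -> ~~ contains EG (glueE s a b EH) ->
  exists E : {set W * W}, [/\ simple_graph E, ~~ contains E EH &
    #|EG| <= #|E| * 2 ^ (2 * (s * #|V|) + 2)].
Proof.
move=> ab G_simple room G_free.
have hit u w := hitting_choiceP u w ab room G_free.
pose Y u w := hitting_choice EH EG a b s u w.
pose Z (e : W * W) := Y e.1 e.2 :|: Y e.2 e.1.
have ends_notin_Z u w : (u \notin Z (u, w)) && (w \notin Z (u, w)).
  have [_ /and3P[uY wY _]] := hit u w; have [_ /and3P[wY' uY' _]] := hit w u.
  by rewrite !inE !negb_or uY wY wY' uY'.
have Z_le e : #|Z e| <= 2 * (s * #|V|).
  rewrite mul2n -addnn (leq_trans (leq_card_setU _ _)) //.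
  by rewrite leq_add ?(hit _ _).1.
have card_sets : #|{set W}| = 2 ^ #|W|.
  by rewrite -[#|{set W}|]cardsT -powersetT card_powerset cardsT.
have [|S dense] := @exists_dense_member _ _ set0 (sparsify EG Z) EG (2 ^ (2 * (s * #|V|) + 2)).
  move=> [u w] uw; have /andP[uZ wZ] := ends_notin_Z u w.
  rewrite card_sets (leq_trans (card_sparsify_keeps uw uZ wZ)) // leq_mul2l.
  by rewrite leq_exp2l // leq_add2r Z_le orbT.
exists (sparsify EG Z S); split=> //.
  by apply: simple_sparsify => // x y; rewrite /Z setUC.
apply: sparsify_free ab _ => u w phi rooted.
have [_ /and3P[_ _ /forallP/(_ phi)/implyP/(_ rooted)]] := hit u w.
by case/existsP=> x /andP[xN xY]; apply/existsP; exists x; rewrite xN inE xY.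
Qed.

Lemma nedges_le_card (T : finType) (E : {set T * T}) : nedges E <= #|E|.
Proof. exact: leq_div. Qed.

Lemma card_le_nedges (T : finType) (E : {set T * T}) : #|E| <= 2 * nedges E + 1.
Proof. rewrite /nedges; lia. Qed.

Lemma nedges_le_sq (n : nat) (E : {set 'I_n * 'I_n}) : nedges E <= n * n.
Proof.
apply: leq_trans (nedges_le_card E) (leq_trans (max_card _) _).
by rewrite card_prod card_ord.
Qed.

Local Open Scope ring_scope.

Lemma natr_le_powR (R : realType) (alpha : R) (n : nat) :
  0 <= alpha -> n%:R <= powR n%:R (1 + alpha).
Proof.
move=> alpha_ge0; case: n => [|n]; first exact: powR_ge0.
by apply: le1r_powR; rewrite ?ler1n // lerDl.
Qed.

Lemma free_nedges_lt (R : realType) (V : finType) (EH : {set V * V}) (alpha C beta : R)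
    (n : nat) (E : {set 'I_n * 'I_n}) :
  0 < C -> 0 < beta -> ES_good_with EH alpha C beta -> (0 < n)%N ->
  simple_graph E -> ~~ contains E EH -> (nedges E)%:R < C * powR n%:R (1 + alpha).
Proof.
move=> C_gt0 beta_gt0 good n_gt0 E_simple E_free; rewrite ltNge; apply/negP => dense.
have n_pos : 0 < n%:R :> R by rewrite ltr0n.
have edges_pos : 0 < (nedges E)%:R :> R.
  exact: lt_le_trans (mulr_gt0 C_gt0 (powR_gt0 _ n_pos)) dense.
have := good n E n_gt0 E_simple dense.
move: E_free; rewrite /contains -leqNgt leqn0 => /eqP ->.
apply/negP; rewrite -ltNge; apply: mulr_gt0 (mulr_gt0 beta_gt0 _) (exprn_gt0 _ n_pos).
exact/exprn_gt0/divr_gt0/exprn_gt0.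
Qed.

(* [s * #|V|] covers the graphs too small for the greedy search, and
   [2 ^ (2 * (s * #|V|) + 2)] is the inverse survival probability of an edge. *)
Lemma glue_free_nedges_le (R : realType) (V : finType) (EH : {set V * V})
    (alpha CH beta : R) (s : nat) (a b : V) (n : nat) (E : {set 'I_n * 'I_n}) :
  0 <= alpha -> 0 < CH -> 0 < beta -> ES_good_with EH alpha CH beta -> (a, b) \in EH ->
  simple_graph E -> ~~ contains E (glueE s a b EH) ->
  (nedges E)%:R <= ((s * #|V|)%:R + (2 * CH + 1) * (2 ^ (2 * (s * #|V|) + 2))%:R)
                     * powR n%:R (1 + alpha).
Proof.
move=> alpha_ge0 CH_gt0 beta_gt0 good ab E_simple E_free.
set N0 := (s * #|V|)%N; set D := (2 ^ _)%N; set P := powR _ _.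
have n_le_P : n%:R <= P := natr_le_powR n alpha_ge0.
have P_ge0 : 0 <= P := powR_ge0 _ _.
have D_term_ge0 : 0 <= (2 * CH + 1) * D%:R * P by rewrite !mulr_ge0 ?ler0n //; lra.
rewrite mulrDl; case: (leqP n N0) => [small|large].
  rewrite -[X in X <= _]addr0 lerD //.
  apply: le_trans (_ : (N0 * n)%:R <= _); last by rewrite natrM ler_wpM2l.
  by rewrite ler_nat (leq_trans (nedges_le_sq E)) // leq_mul2r small orbT.
have [|E' [E'_simple E'_free E_le]] := glue_free_dense_subgraph ab E_simple _ E_free.
  by rewrite card_ord ltnW.
have E'_lt := free_nedges_lt CH_gt0 beta_gt0 good (leq_ltn_trans (leq0n _) large)
  E'_simple E'_free.
have P_ge1 : 1 <= P by apply: le_trans n_le_P; rewrite ler1n (leq_ltn_trans (leq0n _) large).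
rewrite -[X in X <= _]add0r lerD ?mulr_ge0 ?ler0n //.
apply: le_trans (_ : ((2 * nedges E' + 1) * D)%:R <= _).
  rewrite ler_nat (leq_trans (nedges_le_card E)) // (leq_trans E_le) // leq_mul2r.
  by rewrite card_le_nedges orbT.
rewrite natrM -mulrA [D%:R * P]mulrC mulrA ler_wpM2r ?ler0n //.
have -> : (2 * nedges E' + 1)%:R = 2 * (nedges E')%:R + 1 :> R by rewrite natrD natrM.
by rewrite [X in _ <= X]mulrDl mul1r lerD // -mulrA ler_wpM2l // ltW.
Qed.

Lemma turan_le_bound (R : realType) (V : finType) (EH : {set V * V}) (n : nat) (x : R) :
  0 <= x ->
  (forall E : {set 'I_n * 'I_n}, simple_graph E -> ~~ contains E EH -> (nedges E)%:R <= x) ->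
  (turan EH n)%:R <= x.
Proof.
move=> x_ge0 bound; rewrite /turan; elim/big_ind: _ => // [m1 m2|E /andP[]].
  by rewrite /maxn; case: ifP.
exact: bound.
Qed.

Theorem corollary1p11 (R : realType) (V : finType) (EH : {set V * V})
    (alpha : R) (s : nat) (a b : V) :
  simple_graph EH -> 0 <= alpha -> alpha < 1 -> ES_good EH alpha ->
  (0 < s)%N -> (a, b) \in EH ->
  exists C : R, forall n : nat,
    (turan EH n <= turan (glueE s a b EH) n)%N /\
    (turan (glueE s a b EH) n)%:R <= C * powR (n%:R) (1 + alpha).
Proof.
move=> _ alpha_ge0 _ [CH [beta [CH_gt0 [beta_gt0 good]]]] s_gt0 ab.
exists ((s * #|V|)%:R + (2 * CH + 1) * (2 ^ (2 * (s * #|V|) + 2))%:R) => n; split.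
  exact/turan_mono/contains_glue.
apply: turan_le_bound => [|E].
  by rewrite mulr_ge0 ?powR_ge0 // addr_ge0 ?mulr_ge0 ?ler0n //; lra.
exact: glue_free_nedges_le alpha_ge0 CH_gt0 beta_gt0 good ab.
Qed.
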